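(* Let $K$ be a field of characteristic zero, $n\ge1$. Let $\mathcal L$ be the set of $n\times n$ matrices $B$ over $K$ of the form: for $1\le k\le n$ and $0\le i\le k-1$, the entry in row $i-k+n+1$ and column $k$ equals $b_{k,i}$, all entries above these positions (i.e. entries in row $a$, column $k$ with $a< n-k+1$) are $0$, and $b_{k,0}\ne 0$ for all $1\le k\le n$ (so $B$ is zero above the antidiagonal, with nonzero antidiagonal entries $b_{1,0},\dots,b_{n,0}$). Let $s_{k,i}$ be the coordinate function on $\mathcal L$ with $s_{k,i}(B)=b_{k,i}$; these are algebraically independent and $K(\mathcal L)=K(s_{k,i}:1\le k\le n,0\le i\le k-1)$. Order the $s_{k,i}$ as $$s_{1,0}<s_{2,0}<\dots<s_{n,0}<s_{2,1}<s_{3,2}<s_{3,1}<s_{4,3}<s_{4,2}<s_{4,1}<\dots<s_{n,n-1}<s_{n,n-2}<\dots<s_{n,1},$$ i.e. all $s_{k,0}$ first in increasing $k$, then for $k=2,\dots,n$ in turn the functions $s_{k,k-1},s_{k,k-2},\dots,s_{k,1}$. Let $\pi(J_{k,i})$ denote the restriction to $\mathcal L$ of the polynomial $J_{k,i}$ (defined in the context), regarded as an element of $K(\mathcal L)$. Then for every pair $(k,i)$ with $1\le k\le n$, $0\le i\le k-1$ there exist rational functions $\phi_{k,i}\neq 0$ and $\psi_{k,i}$ in the coordinate functions $s_{a,b}$ that are strictly smaller than $s_{k,i}$ in this order, such that $$\pi(J_{k,i})=\phi_{k,i}\,s_{k,i}+\psi_{k,i}.$$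
   Context: Let $M=\mathrm{Mat}(n,K)$ with standard coordinate functions $\{x_{ij}\}$, generic matrix $X=(x_{ij})$ and adjugate matrix $X^*=(x^*_{ij})$, $XX^*=X^*X=\det X\cdot E$. For $1\le k\le n$ and $0\le i\le k-1$, $J_{k,i}$ is the determinant of the $k\times k$ matrix whose first $k-i$ rows are the rows $n-k+i+1,\dots,n$ of $X$ restricted to columns $1,\dots,k$, and whose last $i$ rows are the rows $n-i+1,\dots,n$ of $X^*$ restricted to columns $1,\dots,k$. Note that on $\mathcal L$ the coordinate $x_{a,b}$ restricts to $s_{k,i}$ when $a=i-k+n+1$, $b=k$. *)

From HB Require Import structures.
From mathcomp Require Import all_boot all_order all_algebra.
From mathcomp Require Import mpoly.
Set Implicit Arguments. Unset Strict Implicit. Unset Printing Implicit Defensive.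
Import GRing.Theory.
Local Open Scope ring_scope.

Notation "x %:F" := (@FracField.tofrac _ x).

(* Number of coordinate functions s_{k,i} (1<=k<=n, 0<=i<=k-1). *)
Definition nvars (n : nat) : nat := (n * n.+1) %/ 2.

(* Position (0-based) of s_{k,i} in the order
   s_{1,0}<...<s_{n,0}<s_{2,1}<s_{3,2}<s_{3,1}<...<s_{n,n-1}<...<s_{n,1}. *)
Definition sidx (n k i : nat) : nat :=
  if i == 0%N then k.-1 else (n + (k.-1 * k.-2) %/ 2 + (k.-1 - i))%N.

(* The coordinate function s_{k,i}, as a variable of the polynomial ring
   K[s_{k,i}], whose fraction field is K(L). Variable number t is the
   t-th coordinate function in the order above. *)
Definition s_var (K : fieldType) (n k i : nat) : {mpoly K[nvars n]} :=
  if insub (sidx n k i) is Some j then 'X_j else 0.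

(* Entry (a, b) (0-indexed naturals) of a square matrix; 0 if out of range
   (never used out of range below). *)
Definition mxe (R : nmodType) (n : nat) (M : 'M[R]_n) (a b : nat) : R :=
  match insub a, insub b with Some a', Some b' => M a' b' | _, _ => 0 end.

Definition genX (K : fieldType) (n : nat) : 'M[{mpoly K[n * n]}]_n :=
  \matrix_(a < n, b < n) 'X_(mxvec_index a b).

(* J_{k,i} (k, i as in the paper, rows/columns 0-indexed internally):
   first k-i rows are rows n-k+i+1..n of X (1-indexed), last i rows are
   rows n-i+1..n of X^* = adj X, restricted to columns 1..k. *)
Definition Jpoly (K : fieldType) (n k i : nat) : {mpoly K[n * n]} :=
  \det (\matrix_(r < k, c < k)
          if (r < k - i)%N
          then mxe (genX K n) (n - k + i + r) c
          else mxe (\adj (genX K n)) (n - k + r) c).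

(* Restriction to L: x_{a,b} (1-indexed) |-> s_{b, a-n+b-1} if a >= n-b+1,
   and 0 otherwise.  With 0-indexed a0, b0: nonzero iff a0 + b0 >= n-1,
   and then it is s_{b0+1, a0+b0+1-n}. *)
Definition restr_mx (K : fieldType) (n : nat) : 'M[{mpoly K[nvars n]}]_n :=
  \matrix_(a < n, b < n)
     if (n.-1 <= a + b)%N then s_var K n b.+1 ((a + b).+1 - n) else 0.

Definition restr_tuple (K : fieldType) (n : nat) :
    (n * n).-tuple {mpoly K[nvars n]} :=
  [tuple mxvec (restr_mx K n) 0 j | j < n * n].

Definition piL (K : fieldType) (n : nat) (p : {mpoly K[n * n]}) :
    {mpoly K[nvars n]} := p \mPo (restr_tuple K n).

Definition vars_below (K : fieldType) (N t : nat) (p : {mpoly K[N]}) : Prop :=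
  forall m, m \in msupp p -> forall j : 'I_N, (t <= j)%N -> m j = 0%N.

Definition rat_below (K : fieldType) (N t : nat)
    (f : {fraction {mpoly K[N]}}) : Prop :=
  exists p q : {mpoly K[N]},
    [/\ vars_below t p, vars_below t q, q != 0 & f = p%:F / q%:F].

From HB Require Import structures.
From mathcomp Require Import all_boot all_order all_algebra all_fingroup.
From mathcomp Require Import mpoly.
From mathcomp Require Import zify ring.
Set Implicit Arguments. Unset Strict Implicit. Unset Printing Implicit Defensive.
Import GRing.Theory.
Local Open Scope ring_scope.

(* On L the generic matrix X becomes the matrix B = restr_mx K n, which vanishes
   above its antidiagonal and has the nonzero antidiagonal s_{1,0}, ..., s_{n,0};
   hence adj B vanishes below its antidiagonal. Moving the first i columns of the
   matrix whose determinant is pi(J_{k,i}) to the end makes it block upper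
   triangular, with diagonal blocks G (entries of B) and A (entries of adj B).
   The block A is anti-triangular, so det A is, up to sign, a product of s_{a,0}.
   For i = 0 the block G is anti-triangular as well and det G = +-s_{1,0}...s_{k,0}.
   For i > 0 the top right corner of G is s_{k,i} and all other entries of G are
   earlier coordinates, so expanding det G along its last column gives
   phi s_{k,i} + psi. The cofactor phi of the corner is nonzero: sending every
   s_{m,i} to 1 and all other coordinates to 0 makes it anti-triangular with
   unit antidiagonal. *)

Lemma sidx_posE n k i : (0 < i)%N -> sidx n k i = (n + 'C(k.-1, 2) + (k.-1 - i))%N.
Proof. by case: i => // i _; rewrite /sidx bin2 -divn2. Qed.

Lemma sidx0 n k : sidx n k 0 = k.-1.
Proof. by []. Qed.

Lemma nvarsE n : nvars n = (n + 'C(n, 2))%N.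
Proof. by rewrite /nvars mulnC divn2 -bin2 binS bin1 addnC. Qed.

Lemma leq_bin2_pred m m' : (m < m')%N -> ('C(m.-1, 2) + m.-1 <= 'C(m'.-1, 2))%N.
Proof.
move=> lt_mm'; have -> : ('C(m.-1, 2) + m.-1 = 'C(m, 2))%N.
  by case: m {lt_mm'} => [|m] //=; rewrite binS bin1.
by apply: leq_bin2l; lia.
Qed.

Lemma sidx_lt_nvars n k i : (0 < k <= n)%N -> (i < k)%N -> (sidx n k i < nvars n)%N.
Proof.
move=> lekn ltik; rewrite nvarsE; case: i ltik => [|i] ltik; first by rewrite sidx0; lia.
have := @leq_bin2_pred k n.+1; rewrite sidx_posE //=; lia.
Qed.

Lemma sidx_inj2 n k k' i i' : (0 < k <= n)%N -> (0 < k' <= n)%N ->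
  (i < k)%N -> (i' < k')%N -> sidx n k i = sidx n k' i' -> i = i'.
Proof.
move=> lekn lek'n ltik lti'k'.
case: i ltik => [|i] ltik; case: i' lti'k' => [|i'] lti'k' //;
  rewrite ?sidx0 ?sidx_posE //; try lia.
case: (ltngtP k k') => [lt_kk'|lt_k'k|eq_kk'].
- have := leq_bin2_pred lt_kk'; lia.
- have := leq_bin2_pred lt_k'k; lia.
- by subst k'; lia.
Qed.

Lemma sidx0_lt_pos n k m i : (0 < i)%N -> (0 < m <= n)%N -> (sidx n m 0 < sidx n k i)%N.
Proof. by move=> lt0i lemn; rewrite sidx0 sidx_posE //; lia. Qed.

Lemma sidx_lt_pos n k i m j : (0 < i < k)%N -> (k <= n)%N -> (j < m <= k)%N ->
  (m = k -> i < j)%N -> (sidx n m j < sidx n k i)%N.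
Proof.
move=> /andP[lt0i ltik] lekn /andP[ltjm lemk] ltij; rewrite (sidx_posE _ _ lt0i).
case: (ltngtP m k) lemk => [lt_mk|//|eq_mk] _.
- case: j ltjm {ltij} => [|j] ltjm; rewrite ?sidx0 ?sidx_posE //; first lia.
  by have := leq_bin2_pred lt_mk; lia.
- have {}ltij := ltij eq_mk; rewrite sidx_posE; last lia.
  by subst m; lia.
Qed.

Section VarsBelow.
Variables (K : fieldType) (N t : nat).

Definition vars_belowb (p : {mpoly K[N]}) : bool :=
  all (fun m : 'X_{1..N} => [forall j : 'I_N, (t <= j)%N ==> (m j == 0%N)]) (msupp p).

Lemma vars_belowP p : reflect (vars_below t p) (vars_belowb p).
Proof.
apply: (iffP allP) => [vp m /vp /forallP vm j le_tj | vp m /vp vm].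
  by have /implyP/(_ le_tj)/eqP := vm j.
by apply/forallP => j; apply/implyP => le_tj; rewrite vm.
Qed.

Definition vars_lt : qualifier 0 {mpoly K[N]} := [qualify p | vars_belowb p].

Lemma vars_lt_subring_closed : subring_closed vars_lt.
Proof.
split.
- rewrite qualifE; apply/allP => m; rewrite msupp1 inE => /eqP ->.
  by apply/forallP => j; rewrite mnm0E implybT.
- move=> p q; rewrite !qualifE => /allP vp /allP vq; apply/allP => m.
  by move/msuppB_le; rewrite mem_cat => /orP[/vp | /vq].
- move=> p q; rewrite !qualifE => /allP vp /allP vq; apply/allP => m.
  move/msuppM_le => /allpairsP[[m1 m2] /= [/vp/forallP v1 /vq/forallP v2 ->]].
  apply/forallP => j; apply/implyP => le_tj; rewrite mnmDE.
  by have /implyP/(_ le_tj)/eqP -> := v1 j; have /implyP/(_ le_tj)/eqP -> := v2 j.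
Qed.

HB.instance Definition _ := GRing.isSubringClosed.Build _ vars_belowb
  vars_lt_subring_closed.

Lemma mpolyX_vars_lt (j : 'I_N) : (j < t)%N -> 'X_j \is vars_lt.
Proof.
move=> lt_jt; rewrite qualifE; apply/allP => m; rewrite msuppX inE => /eqP ->.
apply/forallP => l; apply/implyP => le_tl; rewrite mnm1E.
have ne_jl : j != l by apply: contraTneq le_tl => <-; rewrite -ltnNge.
by rewrite (negbTE ne_jl).
Qed.

Lemma det_vars_lt m (A : 'M[{mpoly K[N]}]_m) :
  (forall i j, A i j \is vars_lt) -> \det A \is vars_lt.
Proof.
move=> vA; apply: rpred_sum => s _.
by apply: rpredM; [apply: rpred_sign | apply: rpred_prod => i _; apply: vA].
Qed.

Lemma rat_below_tofrac p : p \is vars_lt -> rat_below t p%:F.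
Proof.
move=> vp; exists p, 1; split; rewrite ?oner_neq0 ?rmorph1 ?divr1 //.
- by apply/vars_belowP.
- by apply/vars_belowP; apply: rpred1.
Qed.

End VarsBelow.

Lemma det_col_perm (R : comPzRingType) m (s : 'S_m) (M : 'M[R]_m) :
  \det (col_perm s M) = (-1) ^+ s * \det M.
Proof. by rewrite col_permE det_mulmx det_perm odd_permV mulrC. Qed.

Definition rev_perm m : 'S_m := perm (@rev_ord_inj m).

Section AntiTriangular.
Variables (R : comPzRingType) (m : nat).

Lemma det_lower_antitrig (M : 'M[R]_m) :
  (forall r c : 'I_m, (r + c < m.-1)%N -> M r c = 0) ->
  \det M = (-1) ^+ rev_perm m * \prod_c M (rev_ord c) c.
Proof.
move=> M0; rewrite -[\det M](signrMK (rev_perm m)) -det_col_perm.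
rewrite det_trig; last first.
  by apply/is_trig_mxP => r c lt_rc; rewrite mxE permE M0 //=; have := ltn_ord c; lia.
congr (_ * _); rewrite (reindex_inj (@rev_ord_inj m)) /=.
by apply: eq_bigr => c _; rewrite mxE permE /= rev_ordK.
Qed.

Lemma det_upper_antitrig (M : 'M[R]_m) :
  (forall r c : 'I_m, (m <= r + c)%N -> M r c = 0) ->
  \det M = (-1) ^+ rev_perm m * \prod_c M (rev_ord c) c.
Proof.
move=> M0; rewrite -[\det M](signrMK (rev_perm m)) -det_col_perm -det_tr det_trig.
  congr (_ * _); rewrite (reindex_inj (@rev_ord_inj m)) /=.
  by apply: eq_bigr => c _; rewrite !mxE permE /= rev_ordK.
by apply/is_trig_mxP => r c lt_rc; rewrite !mxE permE M0 //=; have := ltn_ord r; lia.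
Qed.

End AntiTriangular.

Section AntiTriangularAdjugate.
Variables (R : idomainType) (m : nat) (M : 'M[R]_m).
Hypothesis M_lower : forall r c : 'I_m, (r + c < m.-1)%N -> M r c = 0.
Hypothesis M_antidiag : forall c : 'I_m, M (rev_ord c) c != 0.

Lemma adj_lower_antitrig_col (r c : 'I_m) :
  (forall b : 'I_m, (b < c)%N -> \adj M r (rev_ord b) = 0) ->
  \adj M r (rev_ord c) * M (rev_ord c) c = \det M *+ (r == c).
Proof.
move=> adj0; have <- : (\adj M *m M) r c = \det M *+ (r == c) by rewrite mul_adj_mx mxE.
rewrite [RHS]mxE (bigD1 (rev_ord c)) //= big1 ?addr0 // => a ne_ac.
have [lt_ac | le_ca] := ltnP (a + c) m.-1; first by rewrite M_lower ?mulr0.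
rewrite -[a]rev_ordK adj0 ?mul0r //=.
by move: ne_ac; rewrite -val_eqE /=; have := ltn_ord a; have := ltn_ord c; lia.
Qed.

Lemma adj_lower_antitrig (r c : 'I_m) : (m <= r + c)%N -> \adj M r c = 0.
Proof.
suff adj0 (b : 'I_m) : (b < r)%N -> \adj M r (rev_ord b) = 0.
  by move=> le_m_rc; rewrite -[c]rev_ordK adj0 //=; have := ltn_ord c; lia.
have [N] := ubnP b; elim: N b => // N IHN b /ltnSE le_bN lt_br.
have /eqP := adj_lower_antitrig_col
  (fun a lt_ab => IHN a (leq_trans lt_ab le_bN) (ltn_trans lt_ab lt_br)).
have -> : (r == b) = false by apply/negbTE; rewrite -val_eqE /= gtn_eqF.
by rewrite mulr0n mulf_eq0 (negbTE (M_antidiag b)) orbF => /eqP.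
Qed.

Lemma adj_lower_antidiagE (r : 'I_m) :
  \adj M r (rev_ord r) = (-1) ^+ rev_perm m * \prod_(c | c != r) M (rev_ord c) c.
Proof.
apply: (mulIf (M_antidiag r)); rewrite adj_lower_antitrig_col => [|b lt_br].
  by rewrite eqxx mulr1n (det_lower_antitrig M_lower) (bigD1 r) //= -mulrA [M _ _ * _]mulrC.
by apply: adj_lower_antitrig; have := ltn_ord b; rewrite /=; lia.
Qed.

End AntiTriangularAdjugate.

Lemma mxe_ltE (R : nmodType) m (M : 'M[R]_m) a b (lt_am : (a < m)%N) (lt_bm : (b < m)%N) :
  mxe M a b = M (Ordinal lt_am) (Ordinal lt_bm).
Proof. by rewrite -[a]/(val (Ordinal lt_am)) -[b]/(val (Ordinal lt_bm)) /mxe !valK. Qed.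

Lemma map_mxe (R S : nmodType) (f : {additive R -> S}) m (M : 'M[R]_m) a b :
  f (mxe M a b) = mxe (map_mx f M) a b.
Proof.
rewrite /mxe; case: (insub a : option 'I_m) => [a'|]; case: (insub b : option 'I_m) => [b'|];
  rewrite ?raddf0 //.
by rewrite mxE.
Qed.

Section Restriction.
Variables (K : fieldType) (n : nat).
Local Notation B := (restr_mx K n).
Local Notation s := (s_var K n).

Lemma s_varE k i (lt_idx : (sidx n k i < nvars n)%N) : s k i = 'X_(Ordinal lt_idx).
Proof. by rewrite /s_var insubT. Qed.

Lemma s_var_neq0 k i : (0 < k <= n)%N -> (i < k)%N -> s k i != 0.
Proof.
move=> lekn ltik; rewrite (s_varE (sidx_lt_nvars lekn ltik)).
by apply/eqP => /(congr1 (meval (fun=> 1))); rewrite mevalXU meval0; apply/eqP/oner_neq0.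
Qed.

Lemma s_var_lt t k i : (sidx n k i < t)%N -> s k i \is vars_lt K (nvars n) t.
Proof.
rewrite /s_var; case: insubP => [j _ <- | _ _]; [exact: mpolyX_vars_lt | exact: rpred0].
Qed.

Lemma mxe_restrE a b : (a < n)%N -> (b < n)%N ->
  mxe B a b = if (n.-1 <= a + b)%N then s b.+1 ((a + b).+1 - n) else 0.
Proof. by move=> lt_an lt_bn; rewrite (mxe_ltE _ lt_an lt_bn) mxE. Qed.

Lemma restr_lower_antitrig (a b : 'I_n) : (a + b < n.-1)%N -> B a b = 0.
Proof. by move=> lt_ab; rewrite mxE leqNgt lt_ab. Qed.

Lemma restr_antidiag (b : 'I_n) : B (rev_ord b) b = s b.+1 0.
Proof. by rewrite mxE /=; have := ltn_ord b; case: ifP => [_ lt_bn | ]; [congr s | ]; lia. Qed.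

Lemma restr_antidiag_neq0 (b : 'I_n) : B (rev_ord b) b != 0.
Proof. by rewrite restr_antidiag s_var_neq0 //; have := ltn_ord b; lia. Qed.

Lemma mxe_adj_restr_upper a b : (a < n)%N -> (b < n)%N -> (n <= a + b)%N ->
  mxe (\adj B) a b = 0.
Proof.
move=> lt_an lt_bn le_n_ab; rewrite (mxe_ltE _ lt_an lt_bn).
by apply: adj_lower_antitrig; [exact: restr_lower_antitrig | exact: restr_antidiag_neq0 |].
Qed.

Lemma adj_restr_antidiagE (a : 'I_n) :
  \adj B a (rev_ord a) = (-1) ^+ rev_perm n * \prod_(c | c != a) s c.+1 0.
Proof.
rewrite adj_lower_antidiagE; [|exact: restr_lower_antitrig|exact: restr_antidiag_neq0].
by congr (_ * _); apply: eq_bigr => c _; rewrite restr_antidiag.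
Qed.

Definition Jmx k i : 'M[{mpoly K[nvars n]}]_k := \matrix_(r < k, c < k)
  if (r < k - i)%N then mxe B (n - k + i + r) c else mxe (\adj B) (n - k + r) c.

Lemma Jmx0E k (r c : 'I_k) : Jmx k 0 r c = mxe B (n - k + r) c.
Proof. by rewrite mxE subn0 ltn_ord addn0. Qed.

Lemma piL_Jpoly k i : piL (Jpoly K n k i) = \det (Jmx k i).
Proof.
have genXE : map_mx (comp_mpoly (restr_tuple K n)) (genX K n) = B.
  apply/matrixP => a b; rewrite !mxE comp_mpolyXU -tnth_nth tnth_mktuple.
  by rewrite mxvecE mxE.
rewrite /piL /Jpoly -det_map_mx; congr (\det _); apply/matrixP => r c.
by rewrite !mxE; case: ifP => _; rewrite map_mxe ?map_mx_adj genXE.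
Qed.

End Restriction.

Lemma rot_ord_subproof p i (c : 'I_(p + i)) : ((if (c < p)%N then c + i else c - p) < p + i)%N.
Proof. by have := ltn_ord c; case: ifP; lia. Qed.

Definition rot_ord p i (c : 'I_(p + i)) : 'I_(p + i) := Ordinal (rot_ord_subproof c).

Lemma rot_ord_inj p i : injective (@rot_ord p i).
Proof.
move=> a b /(congr1 val) /=; have := ltn_ord a; have := ltn_ord b.
by case: ifP; case: ifP => lt_ap lt_bp lt_b lt_a eq_ab; apply: val_inj => /=; lia.
Qed.

Definition rot_perm p i : 'S_(p + i) := perm (@rot_ord_inj p i).

Section Decomposition.
Variables (K : fieldType) (n : nat).
Local Notation B := (restr_mx K n).
Local Notation s := (s_var K n).

Definition Gmx p i : 'M[{mpoly K[nvars n]}]_p :=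
  \matrix_(x < p, y < p) mxe B (n - p + x) (y + i).

Definition Amx i : 'M[{mpoly K[nvars n]}]_i :=
  \matrix_(x < i, y < i) mxe (\adj B) (n - i + x) y.

Lemma det_Jmx_block p i : (p + i <= n)%N ->
  (-1) ^+ rot_perm p i * \det (Jmx K n (p + i) i) = \det (Gmx p i) * \det (Amx i).
Proof.
move=> le_pin; rewrite -det_col_perm -[col_perm _ _]submxK.
have -> : dlsubmx (col_perm (rot_perm p i) (Jmx K n (p + i) i)) = 0.
  apply/matrixP => x y; rewrite !mxE permE /=; have := ltn_ord x; have := ltn_ord y.
  by move=> lt_yp lt_xi; rewrite ifF ?ifT; [apply: mxe_adj_restr_upper | ..]; lia.
rewrite det_ublock; congr (_ * _); congr (\det _); apply/matrixP => x y; rewrite !mxE permE /=;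
  have := ltn_ord x; have := ltn_ord y => lt_y lt_x.
- by rewrite ifT ?ifT; [congr mxe | ..]; lia.
- by rewrite ifF ?ifF; [congr mxe | ..]; lia.
Qed.

Lemma GmxE p i (x y : 'I_p) : (p + i <= n)%N ->
  Gmx p i x y = if (p <= x + y + i.+1)%N then s (y + i).+1 (x + y + i.+1 - p) else 0.
Proof.
move=> le_pin; have := ltn_ord x; have := ltn_ord y => lt_yp lt_xp.
rewrite mxE mxe_restrE; try lia.
by case: ifP; case: ifP => le1 le2 //; [congr s | ..]; lia.
Qed.

Lemma Gmx_corner p i : (p.+1 + i <= n)%N -> Gmx p.+1 i ord0 ord_max = s (p.+1 + i) i.
Proof. by move=> le_pin; rewrite GmxE //= ifT; [congr s | ]; lia. Qed.

Lemma Gmx_vars_lt p i (x y : 'I_p) : (0 < i)%N -> (p + i <= n)%N ->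
  (0 < x)%N \/ (y < p.-1)%N -> Gmx p i x y \is vars_lt K (nvars n) (sidx n (p + i) i).
Proof.
move=> lt0i le_pin off_corner; have := ltn_ord x; have := ltn_ord y => lt_yp lt_xp.
rewrite GmxE //; case: ifP => [le_p_xyi | _]; last exact: rpred0.
by apply: s_var_lt; apply: sidx_lt_pos; lia.
Qed.

End Decomposition.

Section CornerCofactor.
Variables (K : fieldType) (n i : nat).
Local Notation s := (s_var K n).

Definition unit_at (t : 'I_(nvars n)) : K :=
  [exists k : 'I_n.+1, (i < k)%N && (val t == sidx n k i)]%:R.

Lemma meval_unit_at k j : (0 < k <= n)%N -> (j < k)%N ->
  meval unit_at (s k j) = (j == i)%:R.
Proof.
move=> lekn ltjk; rewrite (s_varE K (sidx_lt_nvars lekn ltjk)) mevalXU /unit_at /=.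
congr ((nat_of_bool _)%:R); apply/existsP/eqP => [[k' /andP[ltik' /eqP eq_idx]] | eq_ji].
  by apply: (sidx_inj2 (n := n)) eq_idx; have := ltn_ord k'; lia.
have lt_kn1 : (k < n.+1)%N by lia.
by exists (Ordinal lt_kn1); rewrite /= eq_ji eqxx andbT -eq_ji.
Qed.

Lemma cofactor_Gmx_corner_neq0 p : (p.+1 + i <= n)%N ->
  cofactor (Gmx K n p.+1 i) ord0 ord_max != 0.
Proof.
move=> le_pin; rewrite mulf_neq0 ?signr_eq0 //; apply/eqP.
move=> /(congr1 (meval unit_at)); rewrite -det_map_mx meval0 det_upper_antitrig.
  apply/eqP; rewrite mulf_neq0 ?signr_eq0 //; apply/prodf_neq0 => -[x lt_xp] _.
  rewrite 3!mxE GmxE ?lift0 ?lift_max /=; last lia.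
  rewrite ifT ?meval_unit_at; try lia.
  by rewrite (_ : (_ == i) = true) /= ?oner_neq0 //; apply/eqP; lia.
move=> [x lt_xp] [y lt_yp] /= le_p_xy; rewrite 3!mxE GmxE ?lift0 ?lift_max /=; last lia.
case: ifP => _; last by rewrite meval0.
by rewrite meval_unit_at; [case: eqP => //; lia | ..]; lia.
Qed.

End CornerCofactor.

Section LeadingCoefficient.
Variables (K : fieldType) (n : nat).
Local Notation B := (restr_mx K n).
Local Notation vars_lt t := (vars_lt K (nvars n) t).

Lemma adj_restr_antidiag_lt t (a : 'I_n) : (forall b : 'I_n, (sidx n b.+1 0 < t)%N) ->
  \adj B a (rev_ord a) != 0 /\ \adj B a (rev_ord a) \is vars_lt t.
Proof.
move=> lt_t; rewrite adj_restr_antidiagE; split.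
  rewrite mulf_neq0 ?signr_eq0 //; apply/prodf_neq0 => c _.
  by rewrite s_var_neq0 //; have := ltn_ord c; lia.
by rewrite rpredM ?rpred_sign // rpred_prod // => c _; apply: s_var_lt.
Qed.

Lemma det_Amx_lt t i : (i <= n)%N -> (forall b : 'I_n, (sidx n b.+1 0 < t)%N) ->
  \det (Amx K n i) != 0 /\ \det (Amx K n i) \is vars_lt t.
Proof.
move=> le_in lt_t; rewrite det_upper_antitrig => [|x y le_i_xy]; last first.
  rewrite mxE mxe_adj_restr_upper //; have := ltn_ord x; have := ltn_ord y; lia.
have antidiag (x : 'I_i) : exists a : 'I_n, Amx K n i (rev_ord x) x = \adj B a (rev_ord a).
  have lt_an : (n - i + (i - x.+1) < n)%N by have := ltn_ord x; lia.
  have lt_xn : (x < n)%N by have := ltn_ord x; lia.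
  exists (Ordinal lt_an); rewrite mxE (mxe_ltE _ lt_an lt_xn).
  by congr (\adj B _ _); apply: val_inj => /=; have := ltn_ord x; lia.
split.
  rewrite mulf_neq0 ?signr_eq0 //; apply/prodf_neq0 => x _.
  by have [a ->] := antidiag x; case: (adj_restr_antidiag_lt a lt_t).
rewrite rpredM ?rpred_sign // rpred_prod // => x _.
by have [a ->] := antidiag x; case: (adj_restr_antidiag_lt a lt_t).
Qed.

End LeadingCoefficient.

Section Linearity.
Variables (K : fieldType) (n : nat).
Local Notation s := (s_var K n).
Local Notation vars_lt t := (vars_lt K (nvars n) t).

Lemma cofactor_Gmx_lt p i (r : 'I_p.+1) : (0 < i)%N -> (p.+1 + i <= n)%N ->
  cofactor (Gmx K n p.+1 i) r ord_max \is vars_lt (sidx n (p.+1 + i) i).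
Proof.
move=> lt0i le_pin; rewrite rpredM ?rpred_sign // det_vars_lt // => x y.
by rewrite 2!mxE; apply: Gmx_vars_lt => //; right; rewrite lift_max.
Qed.

Lemma Jmx_linear_pos p i : (0 < i)%N -> (p.+1 + i <= n)%N ->
  exists phi psi : {mpoly K[nvars n]},
    [/\ phi != 0, phi \is vars_lt (sidx n (p.+1 + i) i), psi \is vars_lt (sidx n (p.+1 + i) i)
      & \det (Jmx K n (p.+1 + i) i) = phi * s (p.+1 + i) i + psi].
Proof.
move=> lt0i le_pin; set t := sidx n (p.+1 + i) i.
have [nzA A_lt] : \det (Amx K n i) != 0 /\ \det (Amx K n i) \is vars_lt t.
  by apply: det_Amx_lt => [|b]; [lia | apply: sidx0_lt_pos => //; have := ltn_ord b; lia].
have detJ := canRL (signrMK _) (det_Jmx_block K le_pin).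
rewrite (expand_det_col (Gmx K n p.+1 i) ord_max) big_ord_recl Gmx_corner // in detJ.
set G := Gmx K n p.+1 i in detJ; set e := (-1) ^+ _ in detJ.
set S := \sum_(r < p) _ in detJ.
exists (e * cofactor G ord0 ord_max * \det (Amx K n i)), (e * S * \det (Amx K n i)); split.
- by rewrite mulf_neq0 // mulf_neq0 ?signr_eq0 ?cofactor_Gmx_corner_neq0.
- apply: rpredM A_lt; apply: rpredM; [exact: rpred_sign | exact: cofactor_Gmx_lt].
- apply: rpredM A_lt; apply: rpredM; first exact: rpred_sign.
  apply: rpred_sum => r _; apply: rpredM; last exact: cofactor_Gmx_lt.
  by apply: Gmx_vars_lt => //; left.
- by rewrite detJ; ring.
Qed.

Lemma Jmx_linear0 p : (p.+1 <= n)%N ->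
  exists phi : {mpoly K[nvars n]},
    [/\ phi != 0, phi \is vars_lt (sidx n p.+1 0) & \det (Jmx K n p.+1 0) = phi * s p.+1 0].
Proof.
move=> le_pn; rewrite det_lower_antitrig => [|r c lt_rc]; last first.
  have := ltn_ord r; have := ltn_ord c => lt_cp lt_rp.
  by rewrite Jmx0E mxe_restrE ?ifF //; lia.
have J_antidiag (c : 'I_p.+1) : Jmx K n p.+1 0 (rev_ord c) c = s c.+1 0.
  have := ltn_ord c => lt_cp.
  by rewrite Jmx0E mxe_restrE /= ?ifT; [congr s | ..]; lia.
rewrite (eq_bigr _ (fun c _ => J_antidiag c)) big_ord_recr /=.
exists ((-1) ^+ rev_perm p.+1 * \prod_(c < p) s c.+1 0); split; last by rewrite mulrA.
- rewrite mulf_neq0 ?signr_eq0 //; apply/prodf_neq0 => c _.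
  by rewrite s_var_neq0 //; have := ltn_ord c; lia.
- apply: rpredM; first exact: rpred_sign.
  by apply: rpred_prod => c _; apply: s_var_lt; rewrite !sidx0; have := ltn_ord c; lia.
Qed.

Lemma piL_Jpoly_linear k i : (0 < k <= n)%N -> (i < k)%N ->
  exists phi psi : {mpoly K[nvars n]},
    [/\ phi != 0, phi \is vars_lt (sidx n k i), psi \is vars_lt (sidx n k i)
      & piL (Jpoly K n k i) = phi * s k i + psi].
Proof.
move=> lekn ltik; rewrite piL_Jpoly.
have [p eq_k] : exists p, k = (p.+1 + i)%N by exists (k - i).-1; lia.
subst k; case: (posnP i) => [eq_i0 | lt0i]; last by apply: Jmx_linear_pos; lia.
subst i; rewrite addn0 in lekn *.
have [phi [nz_phi phi_lt ->]] := Jmx_linear0 lekn.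
by exists phi, 0; rewrite addr0 rpred0.
Qed.

End Linearity.

Theorem proposition2 (K : fieldType) (n : nat) :
  [pchar K] =i pred0 -> (0 < n)%N ->
  forall k i : nat, (1 <= k <= n)%N -> (i <= k.-1)%N ->
  exists phi psi : {fraction {mpoly K[nvars n]}},
    [/\ phi != 0, rat_below (sidx n k i) phi, rat_below (sidx n k i) psi &
        (piL (Jpoly K n k i))%:F = phi * (s_var K n k i)%:F + psi].
Proof.
move=> _ _ k i lekn leik.
have [|phi [psi [nz_phi phi_lt psi_lt ->]]] := @piL_Jpoly_linear K n k i lekn; first lia.
exists phi%:F, psi%:F; split; [by rewrite tofrac_eq0 | exact: rat_below_tofrac ..|].
by rewrite rmorphD rmorphM.
Qed.
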